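(* Each of the following five sets of four generalized Bell states in $\mathbb{C}^4\otimes\mathbb{C}^4$ is perfectly distinguishable by one-way LOCC using only projective measurements: $\{\ket{\psi_{00}}\}\cup T$ with $T$ one of $\{\ket{\psi_{01}},\ket{\psi_{10}},\ket{\psi_{33}}\}$, $\{\ket{\psi_{01}},\ket{\psi_{11}},\ket{\psi_{32}}\}$, $\{\ket{\psi_{01}},\ket{\psi_{12}},\ket{\psi_{31}}\}$, $\{\ket{\psi_{01}},\ket{\psi_{13}},\ket{\psi_{30}}\}$, $\{\ket{\psi_{01}},\ket{\psi_{11}},\ket{\psi_{30}}\}$.
   Context: Generalized Bell states in $\mathbb{C}^4\otimes\mathbb{C}^4$ (Alice holds the first factor, Bob the second): $\ket{\psi_{nm}}=\frac12\sum_{j=0}^{3}e^{2\pi i jn/4}\ket{j}_A\ket{j\oplus_4 m}_B$ for $n,m\in\{0,1,2,3\}$, where $j\oplus_4 m=(j+m)\bmod 4$. Perfect distinguishability by one-way LOCC using only projective measurements means: one party performs a projective measurement on her subsystem, communicates the outcome classically, and the other party then performs a projective measurement (depending on that outcome) whose result identifies with certainty which state of the set was shared. *)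

From mathcomp Require Import all_boot all_order all_algebra all_field.
Set Implicit Arguments. Unset Strict Implicit. Unset Printing Implicit Defensive.
Import Order.TTheory GRing.Theory Num.Theory.
Local Open Scope ring_scope.

(* A vector of C^4 (x) C^4 is represented by its coefficient matrix M:
   psi = sum_{a,b} M a b |a>_A |b>_B. *)

Definition adjmx (A : 'M[algC]_4) : 'M[algC]_4 := \matrix_(i, j) (A j i)^*.

(* Generalized Bell state psi_{nm} = 1/2 sum_j i^(j n) |j>|j+m mod 4>,
   (e^{2 pi i / 4} = 'i). *)
Definition bell (n m : nat) : 'M[algC]_4 :=
  \matrix_(a, b) (if (b : nat) == ((a + m) %% 4)%N then 2^-1 * 'i ^+ (a * n) else 0).

Definition proj_meas (K : nat) (P : 'I_K -> 'M[algC]_4) : Prop :=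
  (forall k, adjmx (P k) = P k /\ P k *m P k = P k) /\ \sum_(k < K) P k = 1%:M.

(* <psi| (X_A (x) Y_B) |psi> *)
Definition expvalAB (M X Y : 'M[algC]_4) : algC :=
  \sum_(a < 4) \sum_(a' < 4) \sum_(b < 4) \sum_(b' < 4)
     (M a b)^* * X a a' * Y b b' * M a' b'.

Definition expvalBA (M X Y : 'M[algC]_4) : algC := expvalAB M Y X.

(* One-way LOCC with projective measurements, first measurement by the party
   whose probability functional is [ev] (ev X Y: X on first-measuring party,
   Y on the second).  The outcome pair (k,l) determines the state: a guess g
   is correct whenever the outcome occurs with nonzero probability. *)
Definition oneway_proj_dist_by (ev : 'M[algC]_4 -> 'M[algC]_4 -> 'M[algC]_4 -> algC)
  (N : nat) (S : 'I_N -> 'M[algC]_4) : Prop :=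
  exists (K L : nat) (P : 'I_K -> 'M[algC]_4) (Q : 'I_K -> 'I_L -> 'M[algC]_4)
         (g : 'I_K -> 'I_L -> 'I_N),
    proj_meas P /\ (forall k, proj_meas (Q k)) /\
    forall (i : 'I_N) k l, ev (S i) (P k) (Q k l) != 0 -> g k l = i.

Definition oneway_LOCC_proj_distinguishable (N : nat) (S : 'I_N -> 'M[algC]_4) : Prop :=
  oneway_proj_dist_by expvalAB S \/ oneway_proj_dist_by expvalBA S.

Definition bell_set (s : seq (nat * nat)) : 'I_(size s) -> 'M[algC]_4 :=
  fun i => bell (nth (0, 0)%N s i).1 (nth (0, 0)%N s i).2.

From mathcomp Require Import all_boot all_order all_algebra all_field.
From mathcomp Require Import ring.
Set Implicit Arguments. Unset Strict Implicit. Unset Printing Implicit Defensive.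
Import Order.TTheory GRing.Theory Num.Theory.
Local Open Scope ring_scope.

(* Both parties measure in the basis (|0> ± |2>)/√2, (|1> ± |3>)/√2.  The
   amplitude of psi_{nm} on an outcome pair vanishes unless the parity of
   the two "odd" labels agrees with m mod 2 and the agreement of the two
   signs agrees with n mod 2.  Hence the outcome pair reveals
   (n mod 2, m mod 2), and in each of the five sets these parity classes
   are pairwise distinct. *)

Definition pm_sign (k : nat) : algC := if (k < 2)%N then 1 else -1.

(* Unnormalised k-th basis vector: k = 0, 1, 2, 3 is |0>+|2>, |1>+|3>,
   |0>-|2>, |1>-|3>. *)
Definition pm_vec (k a : nat) : algC :=
  if odd a == odd k then (if (a < 2)%N then 1 else pm_sign k) else 0.

Definition pm_proj (k : 'I_4) : 'M[algC]_4 :=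
  \matrix_(a, b) (2^-1 * (pm_vec k a * pm_vec k b)).

Definition pm_amp (M : 'M[algC]_4) (k l : nat) : algC :=
  \sum_(a < 4) \sum_(b < 4) pm_vec k a * M a b * pm_vec l b.

Definition bell_parity (nm : nat * nat) : bool * bool := (odd nm.1, odd nm.2).

Definition outcome_parity (k l : 'I_4) : bool * bool :=
  ((k < 2)%N != (l < 2)%N, odd (k + l)).

Lemma conj_pm_vec k a : (pm_vec k a)^* = pm_vec k a.
Proof.
rewrite /pm_vec /pm_sign; case: ifP => _; last by rewrite rmorph0.
case: ifP => _; first by rewrite rmorph1.
by case: ifP => _; rewrite ?rmorph1 ?rmorphN1.
Qed.

Lemma conj_half : (2^-1 : algC)^* = 2^-1.
Proof. by apply: conj_Creal; rewrite rpredV rpred_nat. Qed.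

Lemma sum_pm_vec_sqr (k : 'I_4) : \sum_(c < 4) pm_vec k c * pm_vec k c = 2.
Proof.
rewrite !big_ord_recl big_ord0 /pm_vec /pm_sign.
by case: k => [[|[|[|[|//]]]] ?] /=; ring.
Qed.

Lemma pm_proj_meas : proj_meas pm_proj.
Proof.
split=> [k|]; first split.
- apply/matrixP => a b; rewrite !mxE !rmorphM /= !conj_pm_vec conj_half.
  by rewrite [pm_vec k b * _]mulrC.
- apply/matrixP => a b; rewrite !mxE.
  under eq_bigr do rewrite !mxE.
  have -> : \sum_(c < 4) 2^-1 * (pm_vec k a * pm_vec k c) *
                         (2^-1 * (pm_vec k c * pm_vec k b)) =
            2^-1 * (pm_vec k a * pm_vec k b) * 2^-1 *
            \sum_(c < 4) pm_vec k c * pm_vec k c.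
    by rewrite mulr_sumr; apply: eq_bigr => c _; ring.
  by rewrite sum_pm_vec_sqr; field.
- apply/matrixP => a b; rewrite summxE !mxE !big_ord_recl big_ord0 !mxE.
  rewrite /pm_vec /pm_sign.
  by case: a => [[|[|[|[|//]]]] ?]; case: b => [[|[|[|[|//]]]] ?] /=; field.
Qed.

(* The product projector is rank one, so its expectation is |amplitude|^2. *)
Lemma expvalAB_pm_proj M k l :
  expvalAB M (pm_proj k) (pm_proj l) =
  (2^-1 * 2^-1) * ((pm_amp M k l)^* * pm_amp M k l).
Proof.
rewrite /expvalAB /pm_amp.
have -> : (\sum_(a < 4) \sum_(b < 4) pm_vec k a * M a b * pm_vec l b)^* =
          \sum_(a < 4) \sum_(b < 4) pm_vec k a * (M a b)^* * pm_vec l b.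
  rewrite rmorph_sum; apply: eq_bigr => a _; rewrite rmorph_sum.
  by apply: eq_bigr => b _; rewrite !rmorphM /= !conj_pm_vec.
rewrite big_distrl mulr_sumr; apply: eq_bigr => a _ /=.
rewrite exchange_big /= big_distrl mulr_sumr; apply: eq_bigr => b _ /=.
rewrite big_distrr mulr_sumr; apply: eq_bigr => a' _ /=.
rewrite big_distrr mulr_sumr; apply: eq_bigr => b' _ /=.
by rewrite !mxE; ring.
Qed.

Lemma expCi_mod4 k : 'i ^+ k = 'i ^+ (k %% 4) :> algC.
Proof.
have i4 : 'i ^+ 4 = 1 :> algC by rewrite (exprM _ 2 2) sqrCi sqrrN expr1n.
by rewrite {1}(divn_eq k 4) exprD mulnC exprM i4 expr1n mul1r.
Qed.

Lemma expCiSS k : 'i ^+ k.+2 = - 'i ^+ k :> algC.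
Proof. by rewrite -addn2 exprD sqrCi mulrN1. Qed.

Lemma bell_mod4 n m : bell n m = bell (n %% 4) (m %% 4).
Proof.
apply/matrixP => a b; rewrite !mxE modnDmr.
by rewrite expCi_mod4 [in RHS]expCi_mod4 modnMmr.
Qed.

Lemma pm_amp_bell n m k l :
  pm_amp (bell n m) k l =
  2^-1 * \sum_(a < 4) pm_vec k a * pm_vec l ((a + m) %% 4) * 'i ^+ (a * n).
Proof.
rewrite /pm_amp mulr_sumr; apply: eq_bigr => a _.
have am_lt4 : ((a + m) %% 4 < 4)%N by rewrite ltn_pmod.
rewrite (bigD1 (Ordinal am_lt4)) //= big1 ?addr0; first by rewrite mxE /= eqxx; ring.
move=> b /eqP b_neq; rewrite mxE; case: ifP => [/eqP b_eq|]; last by rewrite mulr0 mul0r.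
by case: b_neq; apply: val_inj.
Qed.

Lemma pm_amp_bell_eq0 n m (k l : 'I_4) :
  bell_parity (n, m) != outcome_parity k l -> pm_amp (bell n m) k l = 0.
Proof.
rewrite bell_mod4 /bell_parity /= -(odd_mod n (d := 4)) // -(odd_mod m (d := 4)) //.
move: (n %% 4)%N (m %% 4)%N (ltn_pmod n (isT : 0 < 4)%N) (ltn_pmod m (isT : 0 < 4)%N).
(* A finite check: 256 explicit sums of four terms. *)
move=> {}n {}m n_lt4 m_lt4; rewrite pm_amp_bell !big_ord_recl big_ord0 /bump /=.
case: n n_lt4 => [|[|[|[|//]]]] _; case: m m_lt4 => [|[|[|[|//]]]] _;
  case: k => [[|[|[|[|//]]]] ?]; case: l => [[|[|[|[|//]]]] ?] //= _.
all: rewrite /pm_vec /pm_sign /= ?expCiSS ?expr0 ?expr1; ring.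
Qed.

Lemma bell_set_oneway_dist (x : nat * nat) (s : seq (nat * nat)) :
  uniq (map bell_parity (x :: s)) ->
  oneway_proj_dist_by expvalAB (@bell_set (x :: s)).
Proof.
move=> parity_uniq.
pose guess k l : 'I_(size (x :: s)) :=
  inord (index (outcome_parity k l) (map bell_parity (x :: s))).
exists 4%N, 4%N, pm_proj, (fun=> pm_proj), guess.
split; first exact: pm_proj_meas.
split=> [_|i k l]; first exact: pm_proj_meas.
rewrite /bell_set expvalAB_pm_proj.
have [parity_eq _|parity_neq] :=
  eqVneq (bell_parity (nth (0, 0)%N (x :: s) i)) (outcome_parity k l).
  rewrite /guess -parity_eq -(nth_map _ (bell_parity (0, 0)%N)) //.
  by rewrite index_uniq ?size_map // inord_val.
move: parity_neq; rewrite [nth _ _ i]surjective_pairing => /pm_amp_bell_eq0 ->.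
by rewrite rmorph0 !mulr0 eqxx.
Qed.

Theorem theorem7 :
  forall T : seq (nat * nat),
    T \in [:: [:: (0, 1); (1, 0); (3, 3)];
              [:: (0, 1); (1, 1); (3, 2)];
              [:: (0, 1); (1, 2); (3, 1)];
              [:: (0, 1); (1, 3); (3, 0)];
              [:: (0, 1); (1, 1); (3, 0)] ]%N ->
    @oneway_LOCC_proj_distinguishable _ (@bell_set ((0, 0)%N :: T)).
Proof.
move=> T T_in; left; apply: bell_set_oneway_dist.
by move: T_in; rewrite !inE => /orP[|/orP[|/orP[|/orP[]]]] /eqP ->.
Qed.
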